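(* Let $m\ge 1$. If $m=2t$ is even, then $\alpha_{m+1,k}=2(2m+1-k)\alpha_{m,k}-(4k-1)\beta_{m,k-1}$ for $1\le k\le t$; $\beta_{m+1,k}=(1+4k)\alpha_{m,k}+(4m+2k+3)\beta_{m,k}$ for $0\le k\le t-1$; $\alpha_{m+1,0}=2(2m+1)\alpha_{m,0}$ and $\beta_{m+1,t}=(1+4t)\alpha_{m,t}$. If $m=2t+1$ is odd, then $\alpha_{m+1,k}=2(2m+1-k)\alpha_{m,k}-(4k-1)\beta_{m,k-1}$ for $1\le k\le t$; $\alpha_{m+1,0}=2(2m+1)\alpha_{m,0}$ and $\alpha_{m+1,t+1}=-(3+4t)\beta_{m,t}$; $\beta_{m+1,k}=(1+4k)\alpha_{m,k}+(4m+2k+3)\beta_{m,k}$ for $0\le k\le t$.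
   Context: $P_m(x)=\sum_{i=0}^m d_i(m)x^i$ with $d_i(m)=2^{-2m}\sum_{k=i}^m 2^k\binom{2m-2k}{m-k}\binom{m+k}{k}\binom{k}{i}$; $Q_m(x)=2^m m!\,x^mP_m(1/x)$ (degree $m$). $(a_m(x),b_m(x))$ is the symmetric decomposition of $Q_m$: $a_m(x)=\frac{Q_m(x)-x^{m+1}Q_m(1/x)}{1-x}$, $b_m(x)=\frac{x^mQ_m(1/x)-Q_m(x)}{1-x}$. The numbers $\alpha_{m,k},\beta_{m,k}$ are the unique coefficients with $a_m(x)=\sum_{k=0}^{\lfloor m/2\rfloor}\alpha_{m,k}x^k(1+x)^{m-2k}$ and $b_m(x)=\sum_{k=0}^{\lfloor (m-1)/2\rfloor}\beta_{m,k}x^k(1+x)^{m-1-2k}$. *)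

From HB Require Import structures.
From mathcomp Require Import all_boot all_order all_algebra.
Set Implicit Arguments. Unset Strict Implicit. Unset Printing Implicit Defensive.
Import Order.TTheory GRing.Theory Num.Theory.
Local Open Scope ring_scope.

Definition dcoef (m i : nat) : rat :=
  (2%:R ^+ (2 * m))^-1 *
  \sum_(i <= k < m.+1)
     ((2 ^ k * 'C(2 * m - 2 * k, m - k) * 'C(m + k, k) * 'C(k, i))%N)%:R.

Definition Ppoly (m : nat) : {poly rat} :=
  \sum_(i < m.+1) dcoef m i *: 'X^i.

(* Q_m(x) = 2^m m! x^m P_m(1/x) = sum_{i=0}^m 2^m m! d_i(m) x^(m-i) *)
Definition Qpoly (m : nat) : {poly rat} :=
  \sum_(i < m.+1) ((2 ^ m * m`!)%N%:R * dcoef m i) *: 'X^(m - i).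

(* x^m Q_m(1/x) = sum_{i=0}^m 2^m m! d_i(m) x^i  (Q_m has degree <= m) *)
Definition Qrev (m : nat) : {poly rat} :=
  \sum_(i < m.+1) ((2 ^ m * m`!)%N%:R * dcoef m i) *: 'X^i.

Definition apoly (m : nat) : {poly rat} :=
  (Qpoly m - 'X * Qrev m) %/ (1 - 'X).

Definition bpoly (m : nat) : {poly rat} :=
  (Qrev m - Qpoly m) %/ (1 - 'X).

From HB Require Import structures.
From mathcomp Require Import all_boot all_order all_algebra.
From mathcomp Require Import ring zify.
Import Order.TTheory GRing.Theory Num.Theory.
Local Open Scope ring_scope.
Set Implicit Arguments. Unset Strict Implicit. Unset Printing Implicit Defensive.

(* Write Y = 1 + x and R_m = x^m Q_m(1/x).  Expanding d_i(m) and exchanging the sums,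
     Q_m = c_m sum_k e_{m,k} x^(m-k) Y^k,    R_m = c_m sum_k e_{m,k} Y^k,
   where e_{m,k} = 2^k C(2m-2k,m-k) C(m+k,k) and c_m = 2^m m!/4^m.  A three-term
   recurrence for e_{m,k} (from the classical binomial identities) turns into the
   first-order differential recurrences Q_{m+1} = T_m Q_m and R_{m+1} = S_m R_m, for
     T_m p = (2m+1)(2+3x) p - 2xY p',    S_m p = ((2m+2)x + 4m+3) p + 2xY p'.
   Because Q_m(1) = R_m(1) we have Q_m = a_m + x b_m and R_m = a_m + b_m, and these two
   equations determine (a_m, b_m).  Both operators send g_{n,k} = x^k Y^(n-2k) to
   two-term combinations of the same kind, so T_m (a_m + x b_m) and S_m (a_m + b_m),
   computed term by term, exhibit a_{m+1} and b_{m+1} in the basis g.  Coordinates in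
   a family whose k-th member starts with x^k are unique, which gives the general
   recurrences (alpha_rec, beta_rec); the theorem reads off their parity cases. *)

Lemma central_binomialS n :
  (n.+1 * 'C((2 * n).+2, n.+1) = 2 * (2 * n).+1 * 'C(2 * n, n))%N.
Proof.
have h1 := mul_bin_diag (2 * n).+1 n.
have h2 := mul_bin_diag (2 * n).+2 n.
have hsym : 'C((2 * n).+1, n) = 'C((2 * n).+1, n.+1).
  by rewrite -[in RHS]bin_sub; [congr 'C(_, _); lia | lia].
rewrite /= hsym in h1 h2.
apply/eqP; rewrite -(eqn_pmul2l (ltn0Sn n)); apply/eqP; nia.
Qed.

(* e_{m,k} = 2^k C(2m-2k, m-k) C(m+k, k), the coefficients of Q_m in the basis
   x^(m-k) (1+x)^k up to the factor c_m. *)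
Definition ecoef (m k : nat) : rat :=
  (2 ^ k * 'C(2 * m - 2 * k, m - k) * 'C(m + k, k))%N%:R.

Lemma ecoef_diagS m : m.+1%:R * ecoef m.+1 m.+1 = 2 * ((4 * m + 2)%:R * ecoef m m).
Proof.
rewrite /ecoef !subnn !bin0 !muln1 (_ : (m.+1 + m.+1 = (2 * m).+2)%N); last lia.
rewrite (_ : (m + m = 2 * m)%N); last lia.
have := congr1 (fun x : nat => x%:R : rat) (central_binomialS m).
rewrite /= !natrM expnS !natrM => hc.
by rewrite mulrCA hc; ring.
Qed.

(* The three-term recurrence for e_{m,k}; for 0 < j <= m it is the combination of the
   central identity with  (m+1) C(m+1+j,j) = (m+1+j) C(m+j,j)  and
   j C(m+j,j) = (m+j) C(m+j-1,j-1). *)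
Lemma ecoefS m j : (j <= m.+1)%N ->
  m.+1%:R * ecoef m.+1 j =
  2 * ((if (j <= m)%N then ((2 * m + 1)%:R - 2 * j%:R) * ecoef m j else 0)
       + (if j is j'.+1 then ((2 * m + 2)%:R + 2 * j'%:R) * ecoef m j' else 0)).
Proof.
case: (ltngtP j m.+1) => // [ltjm | ->] _; last first.
  by rewrite ltnn add0r ecoef_diagS; congr (2 * (_ * _)); ring.
rewrite ltnS in ltjm; rewrite ltjm /ecoef.
have [n ->] : exists n, m = (n + j)%N by exists (m - j)%N; rewrite subnK.
have hC := congr1 (fun x : nat => x%:R : rat) (central_binomialS n).
rewrite /= !natrM in hC.
rewrite (_ : (2 * (n + j).+1 - 2 * j = (2 * n).+2)%N); last lia.
rewrite (_ : ((n + j).+1 - j = n.+1)%N); last lia.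
rewrite (_ : (2 * (n + j) - 2 * j = 2 * n)%N); last lia.
rewrite (_ : (n + j - j = n)%N); last lia.
case: j {ltjm} => [|j].
  by rewrite !addn0 !bin0 !muln1 !expn0 !mul1n addr0 subr0 hC addn1 mulrA.
rewrite (_ : (2 * (n + j.+1) - 2 * j = (2 * n).+2)%N); last lia.
rewrite (_ : (n + j.+1 - j = n.+1)%N); last lia.
rewrite (_ : ((n + j.+1).+1 + j.+1 = (n + j.+1 + j.+1).+1)%N); last lia.
have hB := congr1 (fun x : nat => x%:R : rat) (mul_bin_down (n + j.+1 + j.+1).+1 j.+1).
have hD := congr1 (fun x : nat => x%:R : rat) (mul_bin_diag (n + j.+1 + j.+1) j).
rewrite /= !natrM (_ : ((n + j.+1 + j.+1).+1 - j.+1 = (n + j.+1).+1)%N) in hB; last lia.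
rewrite !natrM (_ : ((n + j.+1 + j.+1).-1 = n + j.+1 + j)%N) in hD; last lia.
rewrite !natrM expnS natrM.
set c0 := 'C(2 * n, n)%:R in hC *; set c1 := 'C((2 * n).+2, n.+1)%:R in hC *.
set b0 := 'C(n + j.+1 + j.+1, j.+1)%:R in hB hD *.
set b1 := 'C((n + j.+1 + j.+1).+1, j.+1)%:R in hB *.
set b2 := 'C(n + j.+1 + j, j)%:R in hD *.
set p := (2 ^ j)%:R.
apply/eqP; rewrite -subr_eq0; apply/eqP.
transitivity (2 * p * c1 * ((n + j.+1).+1%:R * b1 - (n + j.+1 + j.+1).+1%:R * b0)
   + 2 * p * b0 * (n.+1%:R * c1 - 2 * (2 * n).+1%:R * c0)
   - 4 * p * c1 * ((n + j.+1 + j.+1)%:R * b2 - j.+1%:R * b0)).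
  by ring.
by rewrite hB hC hD !subrr !mulr0 subr0 addr0.
Qed.

Lemma sum_ord_cut (V : nmodType) M N (F : nat -> V) : (M <= N)%N ->
  (forall k, (M <= k)%N -> F k = 0) -> \sum_(k < N) F k = \sum_(k < M) F k.
Proof.
move=> leMN F0; rewrite (big_ord_widen _ _ leMN) [RHS]big_mkcond /=.
by apply: eq_bigr => k _; case: ltnP => // /F0.
Qed.

Lemma sum_shift_index (R : pzRingType) (V : lmodType R) N (u v : nat -> R) (w : nat -> V) :
  u N = 0 ->
  \sum_(k < N) (u k *: w k + v k *: w k.+1) =
  \sum_(k < N.+1) (u k + (if (k : nat) is k'.+1 then v k' else 0)) *: w k.
Proof.
move=> uN0; under [RHS]eq_bigr do rewrite scalerDl.
rewrite !big_split /= big_ord_recr /= uN0 scale0r addr0 [in RHS]big_ord_recl /=.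
by rewrite scale0r add0r.
Qed.

Definition qscale (m : nat) : rat := (2 ^ m * m`!)%N%:R * (2%:R ^+ (2 * m))^-1.

Lemma qscaleS m : qscale m.+1 * 2 = qscale m * m.+1%:R.
Proof.
rewrite /qscale factS expnS !natrM (_ : (2 * m.+1 = (2 * m).+2)%N); last lia.
have h : (2%:R : rat) ^+ (2 * m) != 0 by rewrite expf_neq0 // pnatr_eq0.
by rewrite !exprS; field; rewrite h.
Qed.

Lemma dcoefE m i :
  dcoef m i = (2%:R ^+ (2 * m))^-1 * \sum_(k < m.+1) ecoef m k * 'C(k, i)%:R.
Proof.
rewrite /dcoef big_geq_mkord big_mkcond /=; congr (_ * _); apply: eq_bigr => k _.
by case: leqP => [_|ltki]; rewrite /ecoef ?natrM // (bin_small ltki) mulr0.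
Qed.

Lemma sum_dcoef m (f : nat -> {poly rat}) :
  \sum_(i < m.+1) ((2 ^ m * m`!)%N%:R * dcoef m i) *: f i =
  \sum_(k < m.+1) (qscale m * ecoef m k) *: \sum_(i < m.+1) 'C(k, i)%:R *: f i.
Proof.
under eq_bigr do rewrite dcoefE mulr_sumr mulr_sumr scaler_suml.
rewrite exchange_big /=; apply: eq_bigr => k _; rewrite scaler_sumr.
by apply: eq_bigr => i _; rewrite scalerA /qscale !mulrA.
Qed.

Lemma binomial_expansion (R : comNzRingType) k N : (k < N)%N ->
  \sum_(i < N) 'C(k, i)%:R *: 'X^i = (1 + 'X) ^+ k :> {poly R}.
Proof.
move=> ltkN; rewrite (@sum_ord_cut _ k.+1 _ (fun i => 'C(k, i)%:R *: 'X^i)) //; last first.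
  by move=> i /bin_small ->; rewrite scale0r.
by rewrite addrC exprD1n; apply: eq_bigr => i _; rewrite scaler_nat.
Qed.

Lemma binomial_expansion_rev (R : comNzRingType) k m : (k <= m)%N ->
  \sum_(i < m.+1) 'C(k, i)%:R *: 'X^(m - i) = 'X^(m - k) * (1 + 'X) ^+ k :> {poly R}.
Proof.
move=> lekm; rewrite (@sum_ord_cut _ k.+1 _ (fun i => 'C(k, i)%:R *: 'X^(m - i))) //; last first.
  by move=> i /bin_small ->; rewrite scale0r.
rewrite addrC exprDn mulr_sumr; apply: eq_bigr => -[i /= ltik] _.
rewrite expr1n mulr1 -scaler_nat -scalerAr -exprD; congr (_ *: 'X^_); lia.
Qed.

Lemma Qpoly_binomial m :
  Qpoly m = \sum_(k < m.+1) (qscale m * ecoef m k) *: ('X^(m - k) * (1 + 'X) ^+ k).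
Proof.
rewrite /Qpoly (sum_dcoef m (fun i => 'X^(m - i))); apply: eq_bigr => k _.
by rewrite binomial_expansion_rev // -ltnS.
Qed.

Lemma Qrev_binomial m :
  Qrev m = \sum_(k < m.+1) (qscale m * ecoef m k) *: (1 + 'X) ^+ k.
Proof.
rewrite /Qrev (sum_dcoef m (fun i => 'X^i)); apply: eq_bigr => k _.
by rewrite binomial_expansion.
Qed.

Section EulerOperator.
Variable R : comNzRingType.
Implicit Types (c d s : R) (p : {poly R}).

(* The linear operators p |-> (c(1+x) + dx) p + 2s x(1+x) p'.  Both T_m and S_m are of
   this form, and they send x^k (1+x)^e to a combination of x^k (1+x)^(e+1) and
   x^(k+1) (1+x)^e (eop_monomial). *)
Definition eop c d s p : {poly R} :=
  (c *: (1 + 'X) + d *: 'X) * p + s *: (2%:R * 'X * (1 + 'X) * p^`()).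

Fact eop_is_linear c d s : linear (eop c d s).
Proof.
move=> a p q; rewrite /eop linearP /= !scalerDr !scalerAr !scalerA mulrDr -!mul_polyC.
by ring.
Qed.

HB.instance Definition _ c d s :=
  GRing.isLinear.Build R {poly R} {poly R} _ (eop c d s) (eop_is_linear c d s).

Lemma X_derivXn k : 'X * ('X^k)^`() = k%:R *: ('X^k : {poly R}).
Proof.
rewrite derivXn scaler_nat; case: k => [|k]; first by rewrite !mulr0n mulr0.
by rewrite mulrnAr -exprS.
Qed.

Lemma Y_derivYn e : (1 + 'X) * ((1 + 'X) ^+ e)^`() = e%:R *: ((1 + 'X) ^+ e : {poly R}).
Proof.
rewrite deriv_exp derivD derivC derivX add0r mul1r scaler_nat.
case: e => [|e]; first by rewrite !mulr0n mulr0.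
by rewrite mulrnAr -exprS.
Qed.

Lemma eop_monomial c d s k e :
  eop c d s ('X^k * (1 + 'X) ^+ e) =
  (c + 2%:R * s * k%:R) *: ('X^k * (1 + 'X) ^+ e.+1)
  + (d + 2%:R * s * e%:R) *: ('X^(k.+1) * (1 + 'X) ^+ e).
Proof.
rewrite /eop.
have -> : 2%:R * 'X * (1 + 'X) * ('X^k * (1 + 'X) ^+ e)^`() =
    2%:R * ((1 + 'X) ^+ e.+1 * ('X * ('X^k)^`())
            + 'X^(k.+1) * ((1 + 'X) * ((1 + 'X) ^+ e)^`())) :> {poly R}.
  by rewrite derivM !exprS; ring.
rewrite X_derivXn Y_derivYn -!mul_polyC !exprS !polyCD !polyCM !polyC_natr; ring.
Qed.
End EulerOperator.

Notation qop m := (eop (2 * (2 * m + 1)%:R : rat) (2 * m + 1)%:R (-1)).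
Notation rop m := (eop ((4 * m + 3)%:R : rat) (- (2 * m + 1)%:R) 1).

(* If a linear map sends each w_k to the two-term combination dictated by ecoefS, it
   maps the level-m e-expansion to the level-(m+1) one. *)
Lemma ecoef_sum_rec (L : {linear {poly rat} -> {poly rat}}) m (w w' : nat -> {poly rat}) :
  (forall k, (k <= m)%N -> L (w k) =
     ((2 * m + 1)%:R - 2 * k%:R) *: w' k + ((2 * m + 2)%:R + 2 * k%:R) *: w' k.+1) ->
  L (\sum_(k < m.+1) (qscale m * ecoef m k) *: w k) =
  \sum_(k < m.+2) (qscale m.+1 * ecoef m.+1 k) *: w' k.
Proof.
move=> Lw; rewrite linear_sum.
pose u k := qscale m * (if (k <= m)%N then ((2 * m + 1)%:R - 2 * k%:R) * ecoef m k else 0).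
pose v k := qscale m * (((2 * m + 2)%:R + 2 * k%:R) * ecoef m k).
have -> : \sum_(k < m.+1) L ((qscale m * ecoef m k) *: w k) =
          \sum_(k < m.+1) (u k *: w' k + v k *: w' k.+1).
  apply: eq_bigr => -[k /= ltkm] _; rewrite linearZ /= Lw // scalerDr !scalerA /u /v (ltnSE ltkm).
  by congr (_ *: _ + _ *: _); ring.
rewrite sum_shift_index /u ?ltnn ?mulr0 //; apply: eq_bigr => -[j /= ltjm] _.
congr (_ *: _); apply: (@mulIf _ 2); first by rewrite pnatr_eq0.
rewrite [RHS]mulrAC qscaleS -[RHS]mulrA (@ecoefS m j ltjm) /v.
by case: j {ltjm} => [|j]; rewrite /= ?addr0; ring.
Qed.

Lemma Qpoly_rec m : Qpoly m.+1 = qop m (Qpoly m).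
Proof.
rewrite !Qpoly_binomial; symmetry.
apply: (ecoef_sum_rec (w := fun k => 'X^(m - k) * (1 + 'X) ^+ k)
                      (w' := fun k => 'X^(m.+1 - k) * (1 + 'X) ^+ k)) => k lekm.
rewrite /= eop_monomial subSS subSn // natrB //.
rewrite -!mul_polyC !exprS !polyCD !polyCM !polyCN !polyC_natr.
by ring.
Qed.

Lemma Qrev_rec m : Qrev m.+1 = rop m (Qrev m).
Proof.
rewrite !Qrev_binomial; symmetry.
apply: (ecoef_sum_rec (w := fun k => (1 + 'X) ^+ k) (w' := fun k => (1 + 'X) ^+ k)) => k _.
rewrite /= -[(1 + 'X) ^+ k]mul1r -(expr0 'X) eop_monomial expr1 expr0 !mul1r.
rewrite -!mul_polyC !exprS !polyCD !polyCM !polyCN !polyC_natr.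
by ring.
Qed.

Lemma one_subX_neq0 (R : nzRingType) : (1 - 'X : {poly R}) != 0.
Proof.
apply/negP => /eqP /(congr1 (horner^~ 0)) /eqP.
by rewrite !hornerE /= subr0 oner_eq0.
Qed.

Lemma divp_1subXK (F : fieldType) (p : {poly F}) : root p 1 -> p %/ (1 - 'X) * (1 - 'X) = p.
Proof.
rewrite root_factor_theorem => /divpK dvd_p.
have hp : p = - (p %/ ('X - 1%:P)) * (1 - 'X) by rewrite -{1}dvd_p polyC1; ring.
by rewrite {1}hp mulpK ?one_subX_neq0 // -hp.
Qed.

(* Q_m(1) = R_m(1): both are the sum of the coefficients. *)
Lemma Qpoly_Qrev_at1 m : (Qpoly m).[1] = (Qrev m).[1].
Proof.
rewrite /Qpoly /Qrev !horner_sum; apply: eq_bigr => i _.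
by rewrite !hornerZ !hornerXn !expr1n.
Qed.

Lemma sym_decomposition m : Qpoly m = apoly m + 'X * bpoly m /\ Qrev m = apoly m + bpoly m.
Proof.
have ha : apoly m * (1 - 'X) = Qpoly m - 'X * Qrev m.
  by apply: divp_1subXK; rewrite /root !hornerE Qpoly_Qrev_at1 subrr.
have hb : bpoly m * (1 - 'X) = Qrev m - Qpoly m.
  by apply: divp_1subXK; rewrite /root !hornerE Qpoly_Qrev_at1 subrr.
split; apply: (mulIf (one_subX_neq0 _)); rewrite mulrDl.
  by rewrite -mulrA hb ha; ring.
by rewrite hb ha; ring.
Qed.

Lemma sym_decomposition_unique m U V :
  Qpoly m = U + 'X * V -> Qrev m = U + V -> apoly m = U /\ bpoly m = V.
Proof.
move=> hQ hR; rewrite /apoly /bpoly hQ hR.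
rewrite (_ : U + 'X * V - 'X * (U + V) = U * (1 - 'X)); last by ring.
rewrite (_ : U + V - (U + 'X * V) = V * (1 - 'X)); last by ring.
by rewrite !mulpK ?one_subX_neq0.
Qed.

Lemma unitriangular_coef_unique (R : nzRingType) (w : nat -> {poly R}) N (c d : nat -> R) :
  (forall k, (w k)`_k = 1) -> (forall k i, (i < k)%N -> (w k)`_i = 0) ->
  \sum_(k < N) c k *: w k = \sum_(k < N) d k *: w k ->
  forall k, (k < N)%N -> c k = d k.
Proof.
move=> w_diag w_low; move/eqP; rewrite -subr_eq0 -sumrB => /eqP sum0.
elim/ltn_ind=> k IH ltkN; apply/eqP; rewrite -subr_eq0; apply/eqP.
have := congr1 (fun p : {poly R} => p`_k) sum0.
rewrite /= coef_sum coef0 (bigD1 (Ordinal ltkN)) //= big1 => [|i neq_ik].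
  by rewrite addr0 -scalerBl coefZ w_diag mulr1.
rewrite -scalerBl coefZ; case: (ltngtP i k) => [ltik|ltki|eq_ik].
- by rewrite IH ?subrr ?mul0r //; apply: ltn_trans ltik ltkN.
- by rewrite w_low ?mulr0.
- by move: neq_ik; rewrite -val_eqE /= eq_ik eqxx.
Qed.

Definition gbasis (n k : nat) : {poly rat} := 'X^k * (1 + 'X) ^+ (n - 2 * k).

Lemma gbasis_diag n k : (gbasis n k)`_k = 1.
Proof. by rewrite /gbasis coefXnM ltnn subnn -horner_coef0 !hornerE expr1n. Qed.

Lemma gbasis_low n k i : (i < k)%N -> (gbasis n k)`_i = 0.
Proof. by move=> ltik; rewrite /gbasis coefXnM ltik. Qed.

(* Applied to
   (a_m, b_m) it yields (a_{m+1}, b_{m+1}) (lifts_decomposition); it is linear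
   in the four arguments, so it suffices to know it on basis elements. *)
Definition lifts (m : nat) (u v U V : {poly rat}) : Prop :=
  qop m (u + 'X * v) = U + 'X * V /\ rop m (u + v) = U + V.

Lemma lifts_decomposition m U V :
  lifts m (apoly m) (bpoly m) U V -> apoly m.+1 = U /\ bpoly m.+1 = V.
Proof.
case: (sym_decomposition m) => Qab Rab [stepQ stepR].
apply: sym_decomposition_unique.
  by rewrite Qpoly_rec Qab; exact: stepQ.
by rewrite Qrev_rec Rab; exact: stepR.
Qed.

Lemma lifts_sum m N (u v U V : nat -> {poly rat}) :
  (forall k, (k < N)%N -> lifts m (u k) (v k) (U k) (V k)) ->
  lifts m (\sum_(k < N) u k) (\sum_(k < N) v k) (\sum_(k < N) U k) (\sum_(k < N) V k).
Proof.
move=> liftk; split; rewrite ?mulr_sumr -!big_split linear_sum;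
  by apply: eq_bigr => k _; case: (liftk k (ltn_ord k)).
Qed.

Lemma lifts_add m u v U V u' v' U' V' :
  lifts m u v U V -> lifts m u' v' U' V' -> lifts m (u + u') (v + v') (U + U') (V + V').
Proof.
move=> [hQ hR] [hQ' hR']; split.
  by rewrite !mulrDr addrACA linearD /= hQ hQ' addrACA.
by rewrite addrACA linearD /= hR hR' addrACA.
Qed.

Lemma lifts_scale m c u v U V :
  lifts m u v U V -> lifts m (c *: u) (c *: v) (c *: U) (c *: V).
Proof.
by move=> [hQ hR]; split; rewrite -?scalerAr -scalerDr linearZ /= ?hQ ?hR scalerDr ?scalerAr.
Qed.

Lemma lifts_gbasis m k : (2 * k <= m)%N ->
  lifts m (gbasis m k) 0 ((2 * ((2 * m + 1)%:R - k%:R)) *: gbasis m.+1 k)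
                        ((1 + 4 * k%:R) *: gbasis m k).
Proof.
move=> lekm; rewrite /lifts /gbasis mulr0 !addr0 subSn // !eop_monomial natrB //.
rewrite -!mul_polyC !exprS !polyCD !polyCM !polyCN !polyC_natr.
by split; ring.
Qed.

Lemma lifts_gbasis_pred m k : (2 * k < m)%N ->
  lifts m 0 (gbasis (m - 1) k) ((- (4 * k%:R + 3)) *: gbasis m.+1 k.+1)
                               ((4 * m%:R + 2 * k%:R + 3) *: gbasis m k).
Proof.
move=> ltkm; rewrite /lifts /gbasis !add0r mulrA -exprS !eop_monomial.
rewrite (_ : (m.+1 - 2 * k.+1 = m - 1 - 2 * k)%N); last lia.
rewrite (_ : (m - 2 * k = (m - 1 - 2 * k).+1)%N); last lia.
have -> : (m - 1 - 2 * k)%:R = m%:R - 1 - 2 * k%:R :> rat.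
  by rewrite !natrB ?natrM //; lia.
rewrite -!mul_polyC !exprS !polyCD !polyCM !polyCN !polyCB !polyC_natr.
by split; ring.
Qed.

Lemma lifts_term m k (a b : rat) : ((m < 2 * k)%N -> a = 0) -> ((m <= 2 * k)%N -> b = 0) ->
  lifts m (a *: gbasis m k) (b *: gbasis (m - 1) k)
    ((a * (2 * ((2 * m + 1)%:R - k%:R))) *: gbasis m.+1 k
       + (b * - (4 * k%:R + 3)) *: gbasis m.+1 k.+1)
    ((a * (1 + 4 * k%:R) + b * (4 * m%:R + 2 * k%:R + 3)) *: gbasis m k).
Proof.
have lifts0 : lifts m 0 0 0 0 by split; rewrite ?mulr0 ?addr0 linear0.
move=> a0 b0; rewrite scalerDl -[a *: gbasis m k]addr0 -[b *: gbasis (m - 1) k]add0r.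
apply: lifts_add.
- case: (leqP (2 * k) m) => h; last by rewrite a0 // !(mul0r, scale0r); exact: lifts0.
  by have := lifts_scale a (lifts_gbasis h); rewrite scaler0 !scalerA.
- case: (ltnP (2 * k) m) => h; last by rewrite b0 // !(mul0r, scale0r); exact: lifts0.
  by have := lifts_scale b (lifts_gbasis_pred h); rewrite scaler0 !scalerA.
Qed.

Section CoefficientRecurrences.
Variables alpha beta : nat -> nat -> rat.
Hypothesis Halpha : forall n : nat,
  apoly n = \sum_(k < n./2.+1) alpha n k *: ('X^k * (1 + 'X) ^+ (n - 2 * k)).
Hypothesis Hbeta : forall n : nat, (1 <= n)%N ->
  bpoly n = \sum_(k < n.-1./2.+1) beta n k *: ('X^k * (1 + 'X) ^+ (n - 1 - 2 * k)).

Definition alpha_ext (n k : nat) : rat := if (2 * k <= n)%N then alpha n k else 0.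
Definition beta_ext (n k : nat) : rat := if (2 * k < n)%N then beta n k else 0.

Lemma alpha_ext_in n k : (2 * k <= n)%N -> alpha_ext n k = alpha n k.
Proof. by rewrite /alpha_ext => ->. Qed.

Lemma alpha_ext_out n k : (n < 2 * k)%N -> alpha_ext n k = 0.
Proof. by move=> ltnk; rewrite /alpha_ext leqNgt ltnk. Qed.

Lemma beta_ext_in n k : (2 * k < n)%N -> beta_ext n k = beta n k.
Proof. by rewrite /beta_ext => ->. Qed.

Lemma beta_ext_out n k : (n <= 2 * k)%N -> beta_ext n k = 0.
Proof. by move=> lenk; rewrite /beta_ext ltnNge lenk. Qed.

Lemma apoly_gbasis n N : (n < 2 * N)%N ->
  apoly n = \sum_(k < N) alpha_ext n k *: gbasis n k.
Proof.
move=> ltnN; rewrite Halpha (@sum_ord_cut _ n./2.+1 N (fun k => alpha_ext n k *: gbasis n k)).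
- by apply: eq_bigr => -[k /= ltkn] _; rewrite alpha_ext_in //; move: ltkn; rewrite -divn2; lia.
- by rewrite -divn2; lia.
- by move=> k lek; rewrite alpha_ext_out ?scale0r //; move: lek; rewrite -divn2; lia.
Qed.

Lemma bpoly_gbasis n N : (1 <= n)%N -> (n < 2 * N)%N ->
  bpoly n = \sum_(k < N) beta_ext n k *: gbasis (n - 1) k.
Proof.
move=> len ltnN.
rewrite Hbeta // (@sum_ord_cut _ n.-1./2.+1 N (fun k => beta_ext n k *: gbasis (n - 1) k)).
- by apply: eq_bigr => -[k /= ltkn] _; rewrite beta_ext_in //; move: ltkn; rewrite -divn2; lia.
- by rewrite -divn2; lia.
- by move=> k lek; rewrite beta_ext_out ?scale0r //; move: lek; rewrite -divn2; lia.
Qed.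

Definition alpha_next (m k : nat) : rat :=
  2 * ((2 * m + 1)%:R - k%:R) * alpha_ext m k
  - (if k is k'.+1 then (4 * k'%:R + 3) * beta_ext m k' else 0).

Definition beta_next (m k : nat) : rat :=
  (1 + 4 * k%:R) * alpha_ext m k + (4 * m%:R + 2 * k%:R + 3) * beta_ext m k.

Lemma decomposition_rec m : (1 <= m)%N ->
  apoly m.+1 = \sum_(k < m.+3) alpha_next m k *: gbasis m.+1 k /\
  bpoly m.+1 = \sum_(k < m.+2) beta_next m k *: gbasis m k.
Proof.
move=> hm; apply: lifts_decomposition.
rewrite (@apoly_gbasis m m.+2) ?(@bpoly_gbasis m m.+2) //; try lia.
pose ca (k : nat) : rat := 2 * ((2 * m + 1)%:R - k%:R).
pose da (k : nat) : rat := - (4 * k%:R + 3).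
have -> : \sum_(k < m.+3) alpha_next m k *: gbasis m.+1 k =
    \sum_(k < m.+2) ((alpha_ext m k * ca k) *: gbasis m.+1 k
                     + (beta_ext m k * da k) *: gbasis m.+1 k.+1).
  rewrite (@sum_shift_index _ _ _ (fun k => alpha_ext m k * ca k)
                                  (fun k => beta_ext m k * da k)); last first.
    by rewrite alpha_ext_out ?mul0r //; lia.
  apply: eq_bigr => -[k ltk] _ /=; congr (_ *: _).
  by case: k {ltk} => [|k]; rewrite /alpha_next /ca /da /=; ring.
have -> : \sum_(k < m.+2) beta_next m k *: gbasis m k =
    \sum_(k < m.+2) (alpha_ext m k * (1 + 4 * k%:R)
                     + beta_ext m k * (4 * m%:R + 2 * k%:R + 3)) *: gbasis m k.
  by apply: eq_bigr => k _; rewrite /beta_next mulrC [beta_ext _ _ * _]mulrC.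
exact: lifts_sum (fun k _ => lifts_term (@alpha_ext_out m k) (@beta_ext_out m k)).
Qed.

Lemma coefficient_rec m : (1 <= m)%N ->
  (forall k, (k < m.+3)%N -> alpha_ext m.+1 k = alpha_next m k) /\
  (forall k, (k < m.+2)%N -> beta_ext m.+1 k = beta_next m k).
Proof.
move=> hm; have [ha hb] := decomposition_rec hm.
split=> k ltk.
  apply: (unitriangular_coef_unique (@gbasis_diag m.+1) (@gbasis_low m.+1) _ ltk).
  by rewrite -ha (@apoly_gbasis m.+1 m.+3) //; lia.
apply: (unitriangular_coef_unique (@gbasis_diag m) (@gbasis_low m) _ ltk).
by rewrite -hb (@bpoly_gbasis m.+1 m.+2) ?subn1 //; lia.
Qed.

Lemma alpha_rec m k : (1 <= m)%N -> (2 * k <= m.+1)%N -> alpha m.+1 k = alpha_next m k.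
Proof.
move=> hm lek; rewrite -(alpha_ext_in lek); apply: (coefficient_rec hm).1; lia.
Qed.

Lemma beta_rec m k : (1 <= m)%N -> (2 * k <= m)%N -> beta m.+1 k = beta_next m k.
Proof.
move=> hm lek; rewrite -beta_ext_in; last lia.
by apply: (coefficient_rec hm).2; lia.
Qed.

End CoefficientRecurrences.

(* The theorem: the parity cases of alpha_rec and beta_rec; only the top indices
   k = t (m = 2t) and k = t+1 (m = 2t+1) meet the vanishing of beta_ext resp. alpha_ext. *)
Theorem lemma3p2 (alpha beta : nat -> nat -> rat)
  (Halpha : forall n : nat,
     apoly n = \sum_(k < n./2.+1) alpha n k *: ('X^k * (1 + 'X) ^+ (n - 2 * k)))
  (Hbeta : forall n : nat, (1 <= n)%N ->
     bpoly n = \sum_(k < n.-1./2.+1) beta n k *: ('X^k * (1 + 'X) ^+ (n - 1 - 2 * k)))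
  (m : nat) (hm : (1 <= m)%N) :
  (forall t : nat, m = (2 * t)%N ->
     (forall k : nat, (1 <= k <= t)%N ->
        alpha m.+1 k = 2 * ((2 * m + 1)%:R - k%:R) * alpha m k
                       - (4 * k%:R - 1) * beta m k.-1)
     /\ (forall k : nat, (k <= t - 1)%N ->
        beta m.+1 k = (1 + 4 * k%:R) * alpha m k
                      + (4 * m%:R + 2 * k%:R + 3) * beta m k)
     /\ alpha m.+1 0%N = 2 * (2 * m%:R + 1) * alpha m 0%N
     /\ beta m.+1 t = (1 + 4 * t%:R) * alpha m t)
  /\
  (forall t : nat, m = (2 * t + 1)%N ->
     (forall k : nat, (1 <= k <= t)%N ->
        alpha m.+1 k = 2 * ((2 * m + 1)%:R - k%:R) * alpha m k
                       - (4 * k%:R - 1) * beta m k.-1)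
     /\ alpha m.+1 0%N = 2 * (2 * m%:R + 1) * alpha m 0%N
     /\ alpha m.+1 t.+1 = - (3 + 4 * t%:R) * beta m t
     /\ (forall k : nat, (k <= t)%N ->
        beta m.+1 k = (1 + 4 * k%:R) * alpha m k
                      + (4 * m%:R + 2 * k%:R + 3) * beta m k)).
Proof.
have alphaE := alpha_rec Halpha Hbeta hm; have betaE := beta_rec Halpha Hbeta hm.
have alpha_mid k : (1 <= k)%N -> (2 * k <= m)%N -> alpha m.+1 k =
    2 * ((2 * m + 1)%:R - k%:R) * alpha m k - (4 * k%:R - 1) * beta m k.-1.
  case: k => // k _ lek; rewrite alphaE; last lia.
  by rewrite /alpha_next alpha_ext_in ?beta_ext_in /=; try lia; ring.
have alpha_zero : alpha m.+1 0 = 2 * (2 * m%:R + 1) * alpha m 0.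
  by rewrite alphaE // /alpha_next alpha_ext_in /=; try lia; ring.
have beta_mid k : (2 * k < m)%N -> beta m.+1 k =
    (1 + 4 * k%:R) * alpha m k + (4 * m%:R + 2 * k%:R + 3) * beta m k.
  by move=> ltk; rewrite betaE ?/beta_next ?alpha_ext_in ?beta_ext_in //; lia.
split=> t mt.
  split; first by move=> k /andP[k1 kt]; apply: alpha_mid; lia.
  split; first by move=> k kt; apply: beta_mid; lia.
  split; first exact: alpha_zero.
  rewrite betaE; last lia.
  by rewrite /beta_next alpha_ext_in ?beta_ext_out ?mulr0 ?addr0 //; lia.
split; first by move=> k /andP[k1 kt]; apply: alpha_mid; lia.
split; first exact: alpha_zero.
split; last by move=> k kt; apply: beta_mid; lia.
rewrite alphaE; last lia.
by rewrite /alpha_next alpha_ext_out ?beta_ext_in /=; try lia; rewrite mt; ring.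
Qed.
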